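(* For every integer $n\ge1$, the following identity of rational functions holds: \[ R_n(z)=(-1)^n\frac{(n!)^2}{((2n)!)^2}\cdot\frac{z^{2n}}{(z-1)^{2n+2}}\cdot\frac{1}{Q_n(w)\,Q_n(-w)},\qquad w=\frac{z}{z-1}. \]
   Context: For $n\ge1$ let $y_n(z)=\sum_{k=0}^{n}\frac{(n+k)!}{(n-k)!\,k!}\left(\frac{z}{2}\right)^k$ be the $n$-th Bessel polynomial and let $\alpha_{n1},\dots,\alpha_{nn}$ be its zeros (they are simple). Put $a_{nk}=1-\alpha_{nk}/2$ and $b_{nk}=1+\alpha_{nk}/2$ for $k=1,\dots,n$. Define \[ R_n(z)=\frac{1}{(z-1)^2}-\sum_{k=1}^n\frac{a_{nk}}{1-a_{nk}z}+\sum_{k=1}^n\frac{b_{nk}}{1-b_{nk}z}, \] and the polynomial $Q_n(z)=\frac{n!}{(2n)!}\sum_{k=0}^{n}\frac{(2n-k)!}{(n-k)!}\frac{z^k}{k!}$ (so $Q_n(0)=1$). *)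

From HB Require Import structures.
From mathcomp Require Import all_boot all_order all_algebra.
Set Implicit Arguments. Unset Strict Implicit. Unset Printing Implicit Defensive.
Import Order.TTheory GRing.Theory Num.Theory.
Local Open Scope ring_scope.

Definition bessel_poly (C : numClosedFieldType) (n : nat) : {poly C} :=
  \poly_(k < n.+1)
    (((n + k)`!)%:R / (((n - k)`!)%:R * (k`!)%:R) * (2 ^+ k)^-1).

Definition Qpoly (C : numClosedFieldType) (n : nat) : {poly C} :=
  \poly_(k < n.+1)
    ((n`!)%:R / (((2 * n)%N)`!)%:R
       * (((2 * n - k)%N)`!)%:R / (((n - k)`!)%:R * (k`!)%:R)).

(* R_n(z), where s lists the zeros alpha_{n1},...,alpha_{nn} of y_n,
   a = 1 - alpha/2, b = 1 + alpha/2. *)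
Definition Rfun (C : numClosedFieldType) (s : seq C) (z : C) : C :=
  1 / (z - 1) ^+ 2
  - \sum_(al <- s) (1 - al / 2) / (1 - (1 - al / 2) * z)
  + \sum_(al <- s) (1 + al / 2) / (1 - (1 + al / 2) * z).

From HB Require Import structures.
From mathcomp Require Import all_boot all_order all_algebra separable.
From mathcomp Require Import ring zify.
Set Implicit Arguments.
Unset Strict Implicit.
Unset Printing Implicit Defensive.

Import Order.TTheory GRing.Theory Num.Theory.
Local Open Scope ring_scope.

(* Write w = z / (z - 1) and kappa = n! / (2n)!.  Since Q_n(x) = kappa x^n y_n(2/x),
   the zeros of Q_n are the r = 2/alpha, and the two terms of R_n belonging to alpha
   combine into - (z - 1)^-2 ((w - r)^-1 + (- w - r)^-1).  Summing the logarithmic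
   derivatives gives
     R_n(z) = (z - 1)^-2 (1 - Q'(w)/Q(w) - Q'(-w)/Q(-w)).
   Q_n solves x Q'' = x Q' + 2n Q' - n Q, hence
     P(x) = Q(x) Q(-x) - Q'(x) Q(-x) - Q(x) Q'(-x)
   solves x P' = 2n P and is the monomial (-1)^n kappa^2 x^(2n).  The same identity
   shows that Q_n has simple zeros. *)

Section ReflectedPairing.

Variable R : comNzRingType.
Implicit Types p : {poly R}.

Definition reflect_pairing p : {poly R} :=
  p * (p \Po - 'X) - p^`() * (p \Po - 'X) - p * (p^`() \Po - 'X).

Lemma horner_reflect_pairing p x :
  (reflect_pairing p).[x] =
    p.[x] * p.[- x] - p^`().[x] * p.[- x] - p.[x] * p^`().[- x].
Proof. by rewrite !(hornerD, hornerN, hornerM, horner_comp, hornerX). Qed.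

Lemma reflect_pairing_euler p (d : R) :
  'X * p^`()^`() = 'X * p^`() + (d *+ 2) *: p^`() - d *: p ->
  'X * (reflect_pairing p)^`() = (d *+ 2) *: reflect_pairing p.
Proof.
move=> ode.
have odeN : - 'X * (p^`()^`() \Po - 'X) =
    - 'X * (p^`() \Po - 'X) + (d *+ 2) *: (p^`() \Po - 'X) - d *: (p \Po - 'X).
  have := congr1 (comp_poly (- 'X)) ode.
  by rewrite !(comp_polyM, comp_polyB, comp_polyD, comp_polyZ, comp_polyX).
rewrite /reflect_pairing !(derivD, derivN, derivM, deriv_comp) derivX.
move: ode odeN; rewrite -!mul_polyC polyCMn.
set p1 := p^`(); set p2 := p1^`(); set B := p \Po _; set B1 := p1 \Po _.
set B2 := p2 \Po _; set c := d%:P => ode odeN.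
apply/eqP; rewrite -subr_eq0; apply/eqP.
transitivity (- B * ('X * p2 - ('X * p1 + c *+ 2 * p1 - c * p))
              - p * (- 'X * B2 - (- 'X * B1 + c *+ 2 * B1 - c * B))); first by ring.
by rewrite ode odeN !subrr !mulr0 subr0.
Qed.

End ReflectedPairing.

Lemma reflect_pairing_coef_top (R : idomainType) (p : {poly R}) m :
  size p = m.+1 -> (reflect_pairing p)`_(2 * m) = (-1) ^+ m * lead_coef p ^+ 2.
Proof.
move=> sp; have p0 : p != 0 by rewrite -size_poly_eq0 sp.
have sX : size (- 'X : {poly R}) = 2 by rewrite size_polyN size_polyX.
have sB : size (p \Po - 'X) = m.+1 by rewrite size_comp_poly2.
have B0 : p \Po - 'X != 0 by rewrite -size_poly_eq0 sB.
have sp1 : (size p^`() <= m)%N by rewrite -ltnS -sp lt_size_deriv.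
have sB1 : (size (p^`() \Po - 'X) <= m)%N by rewrite size_comp_poly2.
rewrite /reflect_pairing !coefB.
rewrite [X in _ - X - _]nth_default; last first.
  by apply: leq_trans (size_polyMleq _ _) _; rewrite sB addnS mul2n -addnn leq_add2r.
rewrite [X in _ - X]nth_default; last first.
  by apply: leq_trans (size_polyMleq _ _) _; rewrite sp addSn mul2n -addnn leq_add2l.
have -> : (2 * m)%N = (size (p * (p \Po - 'X))).-1.
  by rewrite size_mul // sp sB; lia.
rewrite -lead_coefE lead_coefM lead_coef_comp ?sX // lead_coefN lead_coefX sp /=.
by rewrite !subr0; ring.
Qed.

Lemma euler_ode_monomial (R : numDomainType) (p : {poly R}) m :
  'X * p^`() = m%:R *: p -> p = p`_m *: 'X^m.
Proof.
move=> ode; apply/polyP => k; rewrite coefZ coefXn.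
have ek : p`_k *+ k = m%:R * p`_k.
  have := congr1 (fun q : {poly R} => q`_k) ode.
  by rewrite /= coefXM coefZ; case: k => [<-|k] /=; rewrite ?mulr0n ?coef_deriv.
have [-> | km] := eqVneq k m; first by rewrite mulr1.
rewrite mulr0.
have : p`_k * (k%:R - m%:R) == 0 by apply/eqP; rewrite mulrBr mulr_natr ek mulrC subrr.
by rewrite mulf_eq0 subr_eq0 eqr_nat (negbTE km) orbF => /eqP.
Qed.

Lemma natr_fact_neq0 (R : numDomainType) m : ((m`!)%:R : R) != 0.
Proof. by rewrite pnatr_eq0 -lt0n fact_gt0. Qed.

Lemma div2_involutive (F : numFieldType) : involutive (fun a : F => 2 / a).
Proof. by move=> a; rewrite invf_div mulrCA mulfV ?mulr1 // pnatr_eq0. Qed.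

Lemma horner_deriv_prod_XsubC (F : fieldType) (r : seq F) x : x \notin r ->
  (\prod_(a <- r) ('X - a%:P))^`().[x] =
    (\prod_(a <- r) ('X - a%:P)).[x] * \sum_(a <- r) (x - a)^-1.
Proof.
elim: r => [|a r IH]; first by rewrite !big_nil derivC !hornerC mulr0.
rewrite inE negb_or => /andP[xa xr].
rewrite !big_cons derivM derivXsubC mul1r hornerD !hornerM IH // !hornerXsubC.
by field; rewrite subr_eq0.
Qed.

Lemma bessel_partial_fraction (F : numFieldType) (a z : F) :
  a != 0 -> z != 1 -> 1 - (1 - a / 2) * z != 0 -> 1 - (1 + a / 2) * z != 0 ->
  (1 + a / 2) / (1 - (1 + a / 2) * z) - (1 - a / 2) / (1 - (1 - a / 2) * z) =
    - ((z - 1) ^+ 2)^-1 * ((z / (z - 1) - 2 / a)^-1 + (- (z / (z - 1)) - 2 / a)^-1).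
Proof.
move=> a0 z1 za zb; set w := z / (z - 1).
have z1' : z - 1 != 0 by rewrite subr_eq0.
have two : (2 : F) != 0 by rewrite pnatr_eq0.
have -> : w - 2 / a = 2 * (1 - (1 - a / 2) * z) / (a * (z - 1)).
  by rewrite /w; field; rewrite z1' a0.
have -> : - w - 2 / a = 2 * (1 - (1 + a / 2) * z) / (a * (z - 1)).
  by rewrite /w; field; rewrite z1' a0.
have za2 : 2 - (2 - a) * z != 0.
  by rewrite (_ : _ - _ = 2 * (1 - (1 - a / 2) * z)) ?mulf_neq0 //; field.
have zb2 : 2 - (2 + a) * z != 0.
  by rewrite (_ : _ - _ = 2 * (1 - (1 + a / 2) * z)) ?mulf_neq0 //; field.
by field; rewrite z1' a0 za2 zb2.
Qed.

Section ReversedBessel.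

Variables (C : numClosedFieldType) (n : nat).

Local Notation Q := (Qpoly C n).
Local Notation kappa := ((n`!)%:R / (((2 * n)%N)`!)%:R : C).

Lemma Qpoly_coef_rec m :
  (n%:R - m%:R) * Q`_m = Q`_m.+1 * (m.+1%:R * ((2 * n)%:R - m%:R)).
Proof.
rewrite /Qpoly !coef_poly; case: (ltnP m n) => [mn | nm]; last first.
  rewrite ltnS (ltnS m.+1) ltnNge nm mul0r.
  have [-> | nm'] := eqVneq m n; first by rewrite subrr mul0r.
  by rewrite leqNgt ltn_neqAle eq_sym nm' nm mulr0.
rewrite !ltnS (ltnW mn) mn.
have e1 : (2 * n - m = (2 * n - m.+1).+1)%N by lia.
have e2 : (n - m = (n - m.+1).+1)%N by lia.
have -> : (n%:R - m%:R : C) = (n - m.+1).+1%:R by rewrite -e2 natrB // ltnW.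
have -> : ((2 * n)%:R - m%:R : C) = (2 * n - m.+1).+1%:R by rewrite -e1 natrB //; lia.
rewrite e1 e2 !factS !natrM.
by field; rewrite !nat1r !natr_fact_neq0 !pnatr_eq0.
Qed.

Lemma Qpoly_euler :
  'X * Q^`()^`() = 'X * Q^`() + (n%:R *+ 2) *: Q^`() - n%:R *: Q.
Proof.
apply/polyP => k; apply/eqP; rewrite -subr_eq0; apply/eqP.
rewrite !(coefB, coefD, coefZ, coefXM, coef_deriv).
case: k => [|m] /=; [move/eqP: (Qpoly_coef_rec 0) | move/eqP: (Qpoly_coef_rec m.+1)];
  by rewrite -subr_eq0 => /eqP rec; apply: etrans _ rec; ring.
Qed.

Lemma size_Qpoly : size Q = n.+1.
Proof.
rewrite /Qpoly size_poly_eq //= subnn (_ : (2 * n - n = n)%N); last by lia.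
by rewrite !(mulf_neq0, invr_eq0, natr_fact_neq0).
Qed.

Lemma lead_coef_Qpoly : lead_coef Q = kappa.
Proof.
rewrite lead_coefE size_Qpoly /Qpoly coef_poly ltnSn subnn fact0 mul1r.
rewrite (_ : (2 * n - n = n)%N); last by lia.
by rewrite mulfK ?natr_fact_neq0.
Qed.

Lemma reflect_pairing_Qpoly :
  reflect_pairing Q = ((-1) ^+ n * kappa ^+ 2) *: 'X^(2 * n).
Proof.
have ode : 'X * (reflect_pairing Q)^`() = (2 * n)%:R *: reflect_pairing Q.
  by rewrite mulnC natrM mulr_natr (reflect_pairing_euler Qpoly_euler).
by rewrite {1}(euler_ode_monomial ode) (reflect_pairing_coef_top size_Qpoly) lead_coef_Qpoly.
Qed.

Lemma horner_Qpoly0 : Q.[0] = 1.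
Proof.
rewrite horner_coef0 /Qpoly coef_poly /= !subn0 fact0 mulr1.
by rewrite divfK ?mulfV ?natr_fact_neq0.
Qed.

Lemma horner_bessel0 : (bessel_poly C n).[0] = 1.
Proof.
rewrite horner_coef0 /bessel_poly coef_poly /= addn0 subn0 fact0 expr0 invr1.
by rewrite !mulr1 mulfV ?natr_fact_neq0.
Qed.

Lemma horner_Qpoly_bessel x : x != 0 ->
  Q.[x] = kappa * x ^+ n * (bessel_poly C n).[2 / x].
Proof.
move=> x0; rewrite /Qpoly /bessel_poly !horner_poly (reindex_inj rev_ord_inj) /=.
rewrite mulr_sumr; apply: eq_bigr => [[i hi]] _ /=.
have ni : (i <= n)%N by rewrite -ltnS.
rewrite subSS (_ : (2 * n - (n - i) = n + i)%N); last by lia.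
rewrite (_ : (n - (n - i) = i)%N); last by lia.
rewrite -[in x ^+ n](subnK ni) exprD expr_div_n.
have two : (2 : C) != 0 by rewrite pnatr_eq0.
by field; rewrite !expf_neq0 // !natr_fact_neq0.
Qed.

Lemma root_Qpoly_neq0 x : root Q x -> x != 0.
Proof. by apply: contraTneq => ->; rewrite /root horner_Qpoly0 oner_eq0. Qed.

Lemma root_Qpoly_deriv x : root Q x -> ~~ root Q^`() x.
Proof.
move=> Qx; apply/negP => Q'x.
have : (-1) ^+ n * kappa ^+ 2 * x ^+ (2 * n) != 0.
  rewrite !mulf_neq0 ?expf_neq0 ?oppr_eq0 ?oner_eq0 ?invr_eq0 ?natr_fact_neq0 //.
  exact: root_Qpoly_neq0.
have := horner_reflect_pairing Q x.
rewrite reflect_pairing_Qpoly hornerZ hornerXn (rootP Qx) (rootP Q'x).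
by rewrite !(mul0r, mulr0, subr0) => ->; rewrite eqxx.
Qed.

Lemma separable_Qpoly : separable_poly Q.
Proof.
rewrite unlock coprimep_def; apply/negPn/negP => /closed_rootP [x].
by rewrite root_gcd => /andP[Qx Q'x]; move: (root_Qpoly_deriv Qx); rewrite Q'x.
Qed.

Variable s : seq C.
Hypothesis s_uniq : uniq s.
Hypothesis root_bessel : forall x, root (bessel_poly C n) x = (x \in s).

Lemma root_Qpoly x : root Q x = (x \in map (fun a => 2 / a) s).
Proof.
rewrite -[x in RHS](div2_involutive x) (mem_map (inv_inj (@div2_involutive C))).
rewrite -root_bessel; apply/idP/idP => root_x.
  have x0 := root_Qpoly_neq0 root_x; move: root_x.
  rewrite /root horner_Qpoly_bessel // !mulf_eq0 !expf_eq0 (negbTE x0) andbF.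
  by rewrite invr_eq0 !(negbTE (natr_fact_neq0 _ _)).
have x0 : x != 0.
  apply: contraTneq root_x => ->; rewrite /root invr0 mulr0 horner_bessel0.
  exact: oner_neq0.
by rewrite /root horner_Qpoly_bessel // (rootP root_x) mulr0.
Qed.

Lemma Qpoly_prod :
  Q = lead_coef Q *: \prod_(r <- map (fun a => 2 / a) s) ('X - r%:P).
Proof.
have [r Dr] := closed_field_poly_normal Q.
have Q0 : lead_coef Q != 0 by rewrite lead_coef_eq0 -size_poly_eq0 size_Qpoly.
suff perm_r : perm_eq r (map (fun a => 2 / a) s) by rewrite -(perm_big _ perm_r).
apply: uniq_perm.
- rewrite -separable_prod_XsubC -(eqp_separable (eqp_scale _ Q0)) -Dr.
  exact: separable_Qpoly.
- by rewrite map_inj_uniq //; exact: inv_inj (@div2_involutive C).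
- by move=> x; rewrite -root_Qpoly Dr rootZ // root_prod_XsubC.
Qed.

Lemma Qpoly_logderiv x : Q.[x] != 0 ->
  Q^`().[x] / Q.[x] = \sum_(a <- s) (x - 2 / a)^-1.
Proof.
move=> Qx; have notroot : x \notin map (fun a => 2 / a) s by rewrite -root_Qpoly.
move: Qx; rewrite Qpoly_prod derivZ !hornerZ horner_deriv_prod_XsubC // !big_map.
rewrite mulf_eq0 negb_or => /andP[c0 P0].
by rewrite mulrA mulrAC mulfV ?mul1r ?mulf_neq0.
Qed.

Lemma bessel_root_neq0 a : a \in s -> a != 0.
Proof.
by rewrite -root_bessel; apply: contraTneq => ->; rewrite /root horner_bessel0 oner_eq0.
Qed.

Lemma Rfun_logderiv z : z != 1 ->
  (forall a, a \in s -> 1 - (1 - a / 2) * z != 0) ->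
  (forall a, a \in s -> 1 - (1 + a / 2) * z != 0) ->
  Q.[z / (z - 1)] != 0 -> Q.[- (z / (z - 1))] != 0 ->
  Rfun s z = ((z - 1) ^+ 2)^-1 *
    (1 - (Q^`().[z / (z - 1)] / Q.[z / (z - 1)]
          + Q^`().[- (z / (z - 1))] / Q.[- (z / (z - 1))])).
Proof.
move=> z1 za zb Qw Qmw.
rewrite /Rfun -addrA [- _ + _]addrC -sumrB !Qpoly_logderiv //.
under eq_big_seq => a sa do
  rewrite (bessel_partial_fraction (bessel_root_neq0 sa) z1 (za a sa) (zb a sa)).
by rewrite -mulr_sumr big_split /= div1r; ring.
Qed.

End ReversedBessel.

Theorem mainTheorem7 (C : numClosedFieldType) (n : nat) (s : seq C) (z : C) :
  (1 <= n)%N ->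
  uniq s ->
  (forall x : C, root (bessel_poly C n) x = (x \in s)) ->
  z != 1 ->
  (forall al, al \in s -> 1 - (1 - al / 2) * z != 0) ->
  (forall al, al \in s -> 1 - (1 + al / 2) * z != 0) ->
  let w := z / (z - 1) in
  (Qpoly C n).[w] * (Qpoly C n).[- w] != 0 ->
  Rfun s z =
    (-1) ^+ n * ((n`!)%:R ^+ 2 / (((2 * n)%N)`!)%:R ^+ 2)
    * (z ^+ (2 * n) / (z - 1) ^+ (2 * n + 2))
    * (1 / ((Qpoly C n).[w] * (Qpoly C n).[- w])).
Proof.
move=> _ s_uniq root_bessel z1 za zb w.
rewrite mulf_eq0 negb_or => /andP[Qw Qmw].
rewrite (Rfun_logderiv s_uniq root_bessel z1 za zb Qw Qmw) -/w.
have := horner_reflect_pairing (Qpoly C n) w.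
rewrite reflect_pairing_Qpoly hornerZ hornerXn => pairing.
have -> : z ^+ (2 * n) / (z - 1) ^+ (2 * n + 2) = w ^+ (2 * n) / (z - 1) ^+ 2.
  by rewrite exprD invfM mulrA expr_div_n.
have z1' : z - 1 != 0 by rewrite subr_eq0.
rewrite -expr_div_n [_ * (w ^+ _ / _)]mulrA pairing; clearbody w.
by field; rewrite Qw Qmw z1'.
Qed.
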